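(* Let $S$ be a left cancellative semigroup and let $\omega$ be a weight on $S$. If $\ell^{1}(S,\omega)$ is pseudo-amenable, then $S$ is a group.
   Context: $S$ is left cancellative if $st=su$ implies $t=u$. A weight on $S$ is a function $\omega:S\to(0,\infty)$ with $\omega(st)\le\omega(s)\omega(t)$. The Beurling algebra $\ell^{1}(S,\omega)$ is the space of $f=\sum_s f(s)\delta_s$ with $\sum_s|f(s)|\omega(s)<\infty$, with convolution $\delta_s*\delta_t=\delta_{st}$. For a Banach algebra $\mathcal{A}$, with $\pi:\mathcal{A}\hat{\otimes}\mathcal{A}\to\mathcal{A}$, $\pi(a\otimes b)=ab$, an approximate diagonal is a net $(m_i)$ in $\mathcal{A}\hat{\otimes}\mathcal{A}$ with $a\cdot m_i-m_i\cdot a\to0$ and $a\pi(m_i)\to a$ for all $a\in\mathcal{A}$ (module actions $c\cdot(a\otimes b)=ca\otimes b$, $(a\otimes b)\cdot c=a\otimes bc$); $\mathcal{A}$ is pseudo-amenable if it has an approximate diagonal. *)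

From HB Require Import structures.
From mathcomp Require Import all_boot all_order all_algebra.
From mathcomp Require Import all_classical all_reals all_analysis.
From mathcomp Require Import complex.
Set Implicit Arguments. Unset Strict Implicit. Unset Printing Implicit Defensive.
Import Order.TTheory GRing.Theory Num.Theory.
Local Open Scope ring_scope.

Section Beurling.
Variable R : realType.

Definition cmod (z : R[i]) : R := complex.Re `|z|.

(* sum of an absolutely summable real family over an arbitrary (choice) type *)
Definition rsum (T : choiceType) (g : T -> R) : R :=
  fine (\esum_(x in [set: T]) (Num.max (g x) 0)%:E)
  - fine (\esum_(x in [set: T]) (Num.max (- g x) 0)%:E).

Definition csum (T : choiceType) (f : T -> R[i]) : R[i] :=
  Complex (rsum (fun x => complex.Re (f x))) (rsum (fun x => complex.Im (f x))).

Definition in_l1 (T : choiceType) (w : T -> R) (f : T -> R[i]) : Prop :=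
  (\esum_(x in [set: T]) (cmod (f x) * w x)%:E < +oo)%E.

Definition l1norm (T : choiceType) (w : T -> R) (f : T -> R[i]) : R :=
  fine (\esum_(x in [set: T]) (cmod (f x) * w x)%:E).

Variable S : choiceType.
Variable op : S -> S -> S.

Definition is_weight (w : S -> R) : Prop :=
  (forall s, 0 < w s) /\ (forall s t, w (op s t) <= w s * w t).

Definition left_cancellative : Prop :=
  forall s t u, op s t = op s u -> t = u.

Definition is_group : Prop :=
  exists e : S, (forall s, op e s = s /\ op s e = s) /\
    (forall s, exists t, op s t = e /\ op t s = e).

(* product weight on S x S: l^1(S,w) (projective tensor) l^1(S,w) = l^1(S x S, w x w) *)
Definition wprod (w : S -> R) (p : S * S) : R := w p.1 * w p.2.

(* convolution in l^1(S,w): delta_s * delta_t = delta_(st) *)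
Definition conv (f g : S -> R[i]) (u : S) : R[i] :=
  csum (fun p : S * S => if op p.1 p.2 == u then f p.1 * g p.2 else 0).

(* left module action  a . (b (x) c) = ab (x) c  on l^1(S x S) *)
Definition lact (a : S -> R[i]) (m : S * S -> R[i]) (q : S * S) : R[i] :=
  csum (fun p : S * S => if op p.1 p.2 == q.1 then a p.1 * m (p.2, q.2) else 0).

(* right module action  (b (x) c) . a = b (x) ca  on l^1(S x S) *)
Definition ract (m : S * S -> R[i]) (a : S -> R[i]) (q : S * S) : R[i] :=
  csum (fun p : S * S => if op p.1 p.2 == q.2 then m (q.1, p.1) * a p.2 else 0).

(* the product map pi(b (x) c) = bc *)
Definition pimap (m : S * S -> R[i]) (u : S) : R[i] :=
  csum (fun p : S * S => if op p.1 p.2 == u then m p else 0).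

Definition approx_diagonal (w : S -> R) (I : Type) (le : I -> I -> Prop)
    (m : I -> S * S -> R[i]) : Prop :=
  [/\ (forall i, le i i),
      (forall i j k, le i j -> le j k -> le i k),
      (forall i j, exists k, le i k /\ le j k),
      (forall i, in_l1 (wprod w) (m i)) &
      (forall a : S -> R[i], in_l1 w a ->
         forall eps : R, 0 < eps -> exists i0, forall i, le i0 i ->
           l1norm (wprod w) (fun q => lact a (m i) q - ract (m i) a q) < eps /\
           l1norm w (fun u => conv a (pimap (m i)) u - a u) < eps)].

Definition pseudo_amenable_l1 (w : S -> R) : Prop :=
  exists (I : Type) (le : I -> I -> Prop) (m : I -> S * S -> R[i]),
    approx_diagonal w le m.

End Beurling.

From Pilot Require Import Defs.
From HB Require Import structures.
From mathcomp Require Import all_boot all_order all_algebra.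
From mathcomp Require Import all_classical all_reals all_analysis.
From mathcomp Require Import complex lra.
Import Order.TTheory GRing.Theory Num.Theory.
Local Open Scope ring_scope.

(* Test the approximate diagonal [m] against point masses [delta s].  As
   [delta s * pimap (m i)] lives on [s S] and approximates [delta s], every [s]
   has a right unit [t], which is a left identity by left cancellation.  Two
   distinct left identities would force the coefficient of [pimap (m i)] at one
   of them to be close to both 0 and 1, so [S] has an identity [e].  If [s] had
   no left inverse, the mass of [pimap (m i)] on [{u | u s = s}] would tend to
   1 (as [pimap (m i)] tends to [delta e]) and to 0: it is also the mass of
   [m i * delta s] on [{q | q.1 q.2 = s}], where [delta s * m i] vanishes.  The
   weight only enters through [w u >= 1] when [u s = s] and
   [w s <= w q.1 * w q.2] when [q.1 q.2 = s]. *)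

Set Implicit Arguments. Unset Strict Implicit. Unset Printing Implicit Defensive.
Local Open Scope classical_set_scope.

Section nonneg_esum.
Variable R : realType.
Local Open Scope ereal_scope.

Lemma ge0_esumZl (T : choiceType) (D : set T) (c : R) (a : T -> \bar R) :
  (0 <= c)%R -> (forall x, 0 <= a x) ->
  \esum_(x in D) (c%:E * a x) = c%:E * \esum_(x in D) a x.
Proof.
move=> c0 a0; rewrite /esum -ereal_supZl //; last first.
  by apply/set0P; exists 0; exists set0; [exact: fsets_set0|rewrite fsbig_set0].
congr ereal_sup; apply/seteqP; split => x /=.
  move=> [A DA <-]; exists (\sum_(x \in A) a x); first by exists A.
  by rewrite ge0_mule_fsumr.
by move=> [y [A DA <-] <-]; exists A => //; rewrite ge0_mule_fsumr.
Qed.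

Lemma esum_setT1 (T : choiceType) (a : T -> \bar R) (t : T) :
  (forall x, x != t -> a x = 0) -> 0 <= a t -> \esum_(x in [set: T]) a x = a t.
Proof.
move=> a0 at0; rewrite (esumID [set t]) ?setTI; last first.
  by move=> x _; have [->|/a0->] := eqVneq x t.
by rewrite esum_set1 // esum1 ?adde0 // => x /= /eqP; exact: a0.
Qed.

Lemma esum_setT_ge (T : choiceType) (a : T -> \bar R) (t : T) :
  (forall x, 0 <= a x) -> a t <= \esum_(x in [set: T]) a x.
Proof.
move=> a0; rewrite (esumID [set t]) ?setTI; last by move=> *; exact: a0.
by rewrite esum_set1 // leeDl //; apply: esum_ge0 => x _; exact: a0.
Qed.

Lemma esum_setT_reindex (U T : choiceType) (i : U -> T) (a : T -> \bar R) :
  injective i -> (forall x, 0 <= a x) -> (forall x, a x != 0 -> exists u, x = i u) ->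
  \esum_(x in [set: T]) a x = \esum_(u in [set: U]) a (i u).
Proof.
move=> i_inj a0 a_range; rewrite (esumID (range i)); last by move=> *; exact: a0.
rewrite !setTI [X in (_ + X)]esum1 ?adde0; first by apply: esum_image => x y _ _ /i_inj.
move=> x /= x_out; apply/eqP; apply: contraT => /a_range [u xu].
by case: x_out; exists u.
Qed.

Lemma esum_setT_pair (A B : choiceType) (g : A * B -> \bar R) :
  (forall x, 0 <= g x) ->
  \esum_(a in [set: A]) \esum_(b in [set: B]) g (a, b) = \esum_(x in [set: A * B]) g x.
Proof.
move=> g0; rewrite (@esum_esum _ _ _ [set: A] (fun=> [set: B]) (fun a b => g (a, b))) //.
have -> : [set: A] `*`` (fun=> [set: B]) = [set: A * B] by apply/seteqP; split.
by apply: eq_esum => -[].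
Qed.

End nonneg_esum.

Section real_sums.
Variable R : realType.
Implicit Types T : choiceType.

Definition rsummable T (g : T -> R) := (\esum_(x in [set: T]) `|g x|%:E < +oo)%E.

Lemma esum_fineK T (g : T -> R) : (forall x, 0 <= g x) ->
  (\esum_(x in [set: T]) (g x)%:E < +oo)%E ->
  \esum_(x in [set: T]) (g x)%:E = (fine (\esum_(x in [set: T]) (g x)%:E))%:E.
Proof.
move=> g0 g_fin; rewrite fineK // ge0_fin_numE //.
by apply: esum_ge0 => x _; rewrite lee_fin.
Qed.

Lemma esum_le_lty T (f g : T -> R) : (forall x, f x <= g x) ->
  (\esum_(x in [set: T]) (g x)%:E < +oo)%E -> (\esum_(x in [set: T]) (f x)%:E < +oo)%E.
Proof. by move=> fg; apply: le_lt_trans; apply: le_esum => x _; rewrite lee_fin. Qed.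

Lemma le_fine_esum T (f g : T -> R) : (forall x, 0 <= f x) -> (forall x, f x <= g x) ->
  (\esum_(x in [set: T]) (g x)%:E < +oo)%E ->
  fine (\esum_(x in [set: T]) (f x)%:E) <= fine (\esum_(x in [set: T]) (g x)%:E).
Proof.
move=> f0 fg g_fin; have g0 x : 0 <= g x by exact: le_trans (f0 x) (fg x).
rewrite -lee_fin -!esum_fineK //; last exact: esum_le_lty g_fin.
by apply: le_esum => x _; rewrite lee_fin.
Qed.

Lemma esumD_fin T (f g : T -> R) : (forall x, 0 <= f x) -> (forall x, 0 <= g x) ->
  (\esum_(x in [set: T]) (f x)%:E < +oo)%E -> (\esum_(x in [set: T]) (g x)%:E < +oo)%E ->
  fine (\esum_(x in [set: T]) (f x + g x)%:E) =
  fine (\esum_(x in [set: T]) (f x)%:E) + fine (\esum_(x in [set: T]) (g x)%:E).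
Proof.
move=> f0 g0 f_fin g_fin; under eq_esum do rewrite EFinD.
rewrite esumD; last 2 first.
- by move=> x _; rewrite lee_fin.
- by move=> x _; rewrite lee_fin.
by rewrite (esum_fineK f0 f_fin) (esum_fineK g0 g_fin).
Qed.

Lemma esumD_lty T (f g : T -> R) : (forall x, 0 <= f x) -> (forall x, 0 <= g x) ->
  (\esum_(x in [set: T]) (f x)%:E < +oo)%E -> (\esum_(x in [set: T]) (g x)%:E < +oo)%E ->
  (\esum_(x in [set: T]) (f x + g x)%:E < +oo)%E.
Proof.
move=> f0 g0 f_fin g_fin; under eq_esum do rewrite EFinD.
by rewrite esumD ?lte_add_pinfty // => x _; rewrite lee_fin.
Qed.

Lemma fine_esum_ge0 T (g : T -> R) : (forall x, 0 <= g x) ->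
  0 <= fine (\esum_(x in [set: T]) (g x)%:E).
Proof. by move=> g0; apply: fine_ge0; apply: esum_ge0 => x _; rewrite lee_fin. Qed.

Lemma maxr0_ge0 (x : R) : 0 <= Num.max x 0.
Proof. by rewrite le_max lexx orbT. Qed.

Lemma maxr0_le_norm (x : R) : Num.max x 0 <= `|x|.
Proof. by rewrite ge_max normr_ge0 ler_norm. Qed.

Lemma maxr0_subN (x : R) : Num.max x 0 - Num.max (- x) 0 = x.
Proof.
have [x0|x0] := leP 0 x; first by rewrite (max_idPr _) ?subr0 // lerNl oppr0.
by rewrite (max_idPl _) ?sub0r ?opprK // lerNr oppr0 ltW.
Qed.

Lemma maxr0_addN (x : R) : Num.max x 0 + Num.max (- x) 0 = `|x|.
Proof.
have [x0|x0] := leP 0 x.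
  by rewrite ger0_norm // (max_idPr _) ?addr0 // lerNl oppr0.
by rewrite ltr0_norm // (max_idPl _) ?add0r // lerNr oppr0 ltW.
Qed.

Lemma rsummable_pos T (g : T -> R) : rsummable g ->
  (\esum_(x in [set: T]) (Num.max (g x) 0)%:E < +oo)%E.
Proof. by apply: esum_le_lty => x; exact: maxr0_le_norm. Qed.

Lemma rsummable_neg T (g : T -> R) : rsummable g ->
  (\esum_(x in [set: T]) (Num.max (- g x) 0)%:E < +oo)%E.
Proof. by apply: esum_le_lty => x; rewrite -normrN maxr0_le_norm. Qed.

Lemma rsummable_le T (g h : T -> R) : (forall x, `|g x| <= h x) ->
  (\esum_(x in [set: T]) (h x)%:E < +oo)%E -> rsummable g.
Proof. exact: esum_le_lty. Qed.

Lemma rsum_posneg T (g p n : T -> R) :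
  (forall x, 0 <= p x) -> (forall x, 0 <= n x) ->
  (\esum_(x in [set: T]) (p x)%:E < +oo)%E -> (\esum_(x in [set: T]) (n x)%:E < +oo)%E ->
  (forall x, g x = p x - n x) ->
  rsum g = fine (\esum_(x in [set: T]) (p x)%:E) - fine (\esum_(x in [set: T]) (n x)%:E).
Proof.
move=> p0 n0 p_fin n_fin gE.
have gp x : Num.max (g x) 0 <= p x by rewrite ge_max p0 gE lerBlDr lerDl n0.
have gn x : Num.max (- g x) 0 <= n x.
  by rewrite ge_max n0 gE opprB lerBlDr lerDl p0.
have gp_fin := esum_le_lty gp p_fin; have gn_fin := esum_le_lty gn n_fin.
have key : fine (\esum_(x in [set: T]) (Num.max (g x) 0 + n x)%:E) =
           fine (\esum_(x in [set: T]) (Num.max (- g x) 0 + p x)%:E).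
  congr fine; apply: eq_esum => x _; congr EFin.
  by have := maxr0_subN (g x); rewrite gE; lra.
move: key; rewrite (esumD_fin (fun x => maxr0_ge0 (g x)) n0 gp_fin n_fin).
by rewrite (esumD_fin (fun x => maxr0_ge0 (- g x)) p0 gn_fin p_fin) /rsum; lra.
Qed.

Lemma rsumB T (f g : T -> R) : rsummable f -> rsummable g ->
  rsum (fun x => f x - g x) = rsum f - rsum g.
Proof.
move=> f_fin g_fin.
have fp := rsummable_pos f_fin; have fn := rsummable_neg f_fin.
have gp := rsummable_pos g_fin; have gn := rsummable_neg g_fin.
have f0 x : 0 <= Num.max (f x) 0 := maxr0_ge0 (f x).
have fN0 x : 0 <= Num.max (- f x) 0 := maxr0_ge0 (- f x).
have g0 x : 0 <= Num.max (g x) 0 := maxr0_ge0 (g x).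
have gN0 x : 0 <= Num.max (- g x) 0 := maxr0_ge0 (- g x).
rewrite (rsum_posneg (fun x => addr_ge0 (f0 x) (gN0 x)) (fun x => addr_ge0 (fN0 x) (g0 x))
  (esumD_lty f0 gN0 fp gn) (esumD_lty fN0 g0 fn gp)) => [|x]; last first.
  by have := maxr0_subN (f x); have := maxr0_subN (g x); lra.
by rewrite (esumD_fin f0 gN0 fp gn) (esumD_fin fN0 g0 fn gp) /rsum; lra.
Qed.

Lemma rsum1 T (g : T -> R) (t : T) : (forall x, x != t -> g x = 0) -> rsum g = g t.
Proof.
move=> g0; rewrite /rsum !(@esum_setT1 _ _ _ t) /= ?lee_fin ?maxr0_ge0 //.
- exact: maxr0_subN.
- by move=> x /g0 ->; rewrite oppr0 maxxx.
- by move=> x /g0 ->; rewrite maxxx.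
Qed.

Lemma rsum0 T (g : T -> R) : (forall x, g x = 0) -> rsum g = 0.
Proof. by move=> g0; rewrite /rsum !esum1 ?subrr // => x _; rewrite g0 ?oppr0 maxxx. Qed.

Lemma rsum_reindex (U T : choiceType) (i : U -> T) (g : T -> R) :
  injective i -> (forall x, g x != 0 -> exists u, x = i u) ->
  rsum g = rsum (fun u => g (i u)).
Proof.
move=> i_inj g_range; rewrite /rsum !(esum_setT_reindex i_inj) // => x;
  first [by rewrite lee_fin maxr0_ge0 | move=> nz; apply: g_range].
all: by apply: contra nz => /eqP ->; rewrite ?oppr0 maxxx.
Qed.

Lemma esum_pair_fine (A B : choiceType) (h : A * B -> R) :
  (forall x, 0 <= h x) -> (\esum_(x in [set: A * B]) (h x)%:E < +oo)%E ->
  (forall a, \esum_(b in [set: B]) (h (a, b))%:E < +oo)%E /\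
  \esum_(a in [set: A]) (fine (\esum_(b in [set: B]) (h (a, b))%:E))%:E =
  \esum_(x in [set: A * B]) (h x)%:E.
Proof.
move=> h0 h_fin; have h0E x : (0 <= (h x)%:E)%E by rewrite lee_fin.
have inner_fin a : (\esum_(b in [set: B]) (h (a, b))%:E < +oo)%E.
  apply: le_lt_trans h_fin; rewrite -esum_setT_pair //.
  apply: (esum_setT_ge (a := fun a0 => \esum_(b in [set: B]) (h (a0, b))%:E)%E a) => a0.
  exact: esum_ge0.
split => //; rewrite -esum_setT_pair //.
by apply: eq_esum => a _; rewrite -esum_fineK.
Qed.

Lemma rsum_pair (A B : choiceType) (g : A * B -> R) : rsummable g ->
  rsum g = rsum (fun a => rsum (fun b => g (a, b))).
Proof.
move=> g_fin.
have [pos_fin posE] := esum_pair_fine (fun x => maxr0_ge0 (g x)) (rsummable_pos g_fin).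
have [neg_fin negE] := esum_pair_fine (fun x => maxr0_ge0 (- g x)) (rsummable_neg g_fin).
have P0 a := fine_esum_ge0 (fun b => maxr0_ge0 (g (a, b))).
have N0 a := fine_esum_ge0 (fun b => maxr0_ge0 (- g (a, b))).
rewrite [RHS](rsum_posneg P0 N0 _ _ (fun a => erefl)).
- by rewrite posE negE.
- by rewrite posE; exact: rsummable_pos.
- by rewrite negE; exact: rsummable_neg.
Qed.

Lemma ler_norm_rsum T (g : T -> R) : rsummable g ->
  `|rsum g| <= fine (\esum_(x in [set: T]) `|g x|%:E).
Proof.
move=> g_fin; under eq_esum do rewrite -maxr0_addN.
have g0 x := maxr0_ge0 (g x); have gN0 x := maxr0_ge0 (- g x).
rewrite (esumD_fin g0 gN0 (rsummable_pos g_fin) (rsummable_neg g_fin)).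
by rewrite (le_trans (ler_normB _ _)) // !ger0_norm ?fine_esum_ge0.
Qed.

Lemma rsum_pair_reindex (V A B : choiceType) (i : V -> A * B) (K : A * B -> R) :
  injective i -> (forall x, K x != 0 -> exists v, x = i v) -> rsummable (fun v => K (i v)) ->
  rsum (fun v => K (i v)) = rsum (fun a => rsum (fun b => K (a, b))).
Proof.
move=> i_inj K_range Ki_fin; have K_fin : rsummable K.
  rewrite /rsummable (esum_setT_reindex i_inj) // => x;
    first [by rewrite lee_fin | by rewrite eqe normr_eq0; exact: K_range].
by rewrite -rsum_reindex // rsum_pair.
Qed.

Lemma not_half_close_0_1 (x : R) : `|x| < 1 / 2 -> `|x - 1| < 1 / 2 -> False.
Proof.
have := ler_normB x (x - 1); rewrite opprB addrC subrK normr1; lra.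
Qed.

End real_sums.

Section complex_sums.
Variable R : realType.
Implicit Types (T : choiceType) (z : R[i]).

Lemma cmodE z : cmod z = Num.sqrt (complex.Re z ^+ 2 + complex.Im z ^+ 2).
Proof. by rewrite /cmod normc_def. Qed.

Lemma cmod_ge0 z : 0 <= cmod z.
Proof. by rewrite cmodE sqrtr_ge0. Qed.

Lemma cmod0 : cmod (0 : R[i]) = 0.
Proof. by rewrite /cmod normr0. Qed.

Lemma cmod1 : cmod (1 : R[i]) = 1.
Proof. by rewrite /cmod normr1. Qed.

Lemma cmodN z : cmod (- z) = cmod z.
Proof. by rewrite /cmod normrN. Qed.

Lemma cmodB (a b : R[i]) : cmod (a - b) <= cmod a + cmod b.
Proof.
have normcE z : cmod z = Normc.normc z by rewrite /cmod normc_def; case: z.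
by rewrite !normcE -(normcN b) le_normcD.
Qed.

Lemma ReB (a b : R[i]) : complex.Re (a - b) = complex.Re a - complex.Re b.
Proof. by case: a; case: b. Qed.

Lemma Re_le_cmod z : `|complex.Re z| <= cmod z.
Proof. by rewrite cmodE -sqrtr_sqr ler_wsqrtr // lerDl sqr_ge0. Qed.

Lemma Im_le_cmod z : `|complex.Im z| <= cmod z.
Proof. by rewrite cmodE -sqrtr_sqr ler_wsqrtr // lerDr sqr_ge0. Qed.

Lemma cmod_le_Re_Im z : cmod z <= `|complex.Re z| + `|complex.Im z|.
Proof.
rewrite cmodE -[X in _ <= X]ger0_norm ?addr_ge0 // -sqrtr_sqr ler_wsqrtr //.
rewrite -(real_normK (num_real (complex.Re z))) -(real_normK (num_real (complex.Im z))).
have := normr_ge0 (complex.Re z); have := normr_ge0 (complex.Im z); nra.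
Qed.

Lemma csum1 T (f : T -> R[i]) (t : T) : (forall x, x != t -> f x = 0) -> csum f = f t.
Proof. by move=> f0; rewrite /csum !(@rsum1 _ _ _ t) => [|x /f0->|x /f0->] //; case: (f t). Qed.

Lemma csum0 T (f : T -> R[i]) : (forall x, f x = 0) -> csum f = 0.
Proof. by move=> f0; rewrite /csum !rsum0 // => x; rewrite f0. Qed.

Lemma cmod_csum_le T (f : T -> R[i]) :
  ((cmod (csum f))%:E <= 2%:E * \esum_(x in [set: T]) (cmod (f x))%:E)%E.
Proof.
have [f_fin|] := boolP (\esum_(x in [set: T]) (cmod (f x))%:E < +oo)%E; last first.
  rewrite -leNgt leye_eq => /eqP ->.
  by rewrite mulry gtr0_sg // mul1e leey.
have Re_fin : rsummable (fun x => complex.Re (f x)).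
  by apply: rsummable_le f_fin => x; exact: Re_le_cmod.
have Im_fin : rsummable (fun x => complex.Im (f x)).
  by apply: rsummable_le f_fin => x; exact: Im_le_cmod.
have Re_le := le_fine_esum (fun x => normr_ge0 _) (fun x => Re_le_cmod (f x)) f_fin.
have Im_le := le_fine_esum (fun x => normr_ge0 _) (fun x => Im_le_cmod (f x)) f_fin.
rewrite (esum_fineK (fun x => cmod_ge0 (f x)) f_fin) -EFinM lee_fin.
apply: le_trans (cmod_le_Re_Im _) _.
by have := ler_norm_rsum Re_fin; have := ler_norm_rsum Im_fin; rewrite /csum /=; lra.
Qed.

Lemma esum_cmod_csum_le (U T : choiceType) (W : U -> R) (h : U -> T -> R[i]) :
  (forall u, 0 <= W u) ->
  (\esum_(u in [set: U]) (cmod (csum (h u)) * W u)%:E <=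
   2%:E * \esum_(x in [set: U * T]) (W x.1 * cmod (h x.1 x.2))%:E)%E.
Proof.
move=> W0; have cmod0E u t : (0 <= (cmod (h u t))%:E)%E by rewrite lee_fin cmod_ge0.
rewrite -esum_setT_pair => [|x]; last by rewrite lee_fin mulr_ge0 ?cmod_ge0.
rewrite -ge0_esumZl // => [|u]; last by apply: esum_ge0 => t _; rewrite lee_fin mulr_ge0 ?cmod_ge0.
apply: le_esum => u _ /=; under eq_esum do rewrite EFinM.
rewrite ge0_esumZl // EFinM muleC muleCA.
by apply: lee_wpmul2l; rewrite ?lee_fin // cmod_csum_le.
Qed.

End complex_sums.

Section weighted_l1.
Variables (R : realType) (T : choiceType) (v : T -> R).
Hypothesis v_ge0 : forall x, 0 <= v x.
Implicit Types f g : T -> R[i].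

Let cmod_mul_ge0 f x : 0 <= cmod (f x) * v x.
Proof. by rewrite mulr_ge0 ?cmod_ge0. Qed.

(* [l1norm] is [fine] of a possibly infinite sum, hence [0] off [in_l1]; this is why
   the closure lemmas for [in_l1] below are needed. *)
Lemma cmod_le_l1norm f q : in_l1 v f -> cmod (f q) * v q <= l1norm v f.
Proof.
move=> f_fin; rewrite -lee_fin /l1norm -(esum_fineK (cmod_mul_ge0 f) f_fin).
by apply: (esum_setT_ge (a := fun x => (cmod (f x) * v x)%:E)) => x; rewrite lee_fin.
Qed.

Lemma in_l1B f g : in_l1 v f -> in_l1 v g -> in_l1 v (fun x => f x - g x).
Proof.
move=> f_fin g_fin.
apply: (@esum_le_lty _ _ _ (fun x => cmod (f x) * v x + cmod (g x) * v x)).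
  by move=> x; rewrite -mulrDl ler_wpM2r ?cmodB.
exact: esumD_lty (cmod_mul_ge0 f) (cmod_mul_ge0 g) f_fin g_fin.
Qed.

Lemma rsum_restrict_le (A : pred T) (g : T -> R) f (c : R) :
  0 < c -> (forall x, A x -> c <= v x) -> (forall x, A x -> `|g x| <= cmod (f x)) ->
  in_l1 v f ->
  rsummable (fun x => if A x then g x else 0) /\
  c * `|rsum (fun x => if A x then g x else 0)| <= l1norm v f.
Proof.
move=> c_gt0 cv gf f_fin; set gA := fun x => if A x then g x else 0.
have bound x : c * `|gA x| <= cmod (f x) * v x.
  rewrite /gA; case: ifP => Ax; last by rewrite normr0 mulr0.
  by rewrite mulrC; apply: ler_pM; [exact: normr_ge0|exact: ltW|exact: gf|exact: cv].
have cgA_fin := esum_le_lty bound f_fin.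
have cgAE : \esum_(x in [set: T]) (c * `|gA x|)%:E = (c%:E * \esum_(x in [set: T]) `|gA x|%:E)%E.
  by under eq_esum do rewrite EFinM; rewrite ge0_esumZl ?ltW // => x; rewrite lee_fin.
have gA_fin : rsummable gA.
  move: cgA_fin; rewrite cgAE; apply: contraTT; rewrite -leNgt leye_eq => /eqP ->.
  by rewrite gt0_muley ?lte_fin // ltxx.
split => //; apply: le_trans (ler_wpM2l (ltW c_gt0) (ler_norm_rsum gA_fin)) _.
rewrite -lee_fin EFinM -(esum_fineK (fun x => normr_ge0 (gA x)) gA_fin).
by rewrite -cgAE /l1norm -esum_fineK // le_esum // => x _; rewrite lee_fin.
Qed.

End weighted_l1.

Lemma in_l1_csum (R : realType) (U T V : choiceType) (W : U -> R) (W' : V -> R)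
    (h : U -> T -> R[i]) (g : V -> R[i]) (i : V -> U * T) (c : R) :
  (forall u, 0 <= W u) -> (forall x, 0 <= W' x) -> 0 <= c -> injective i ->
  (forall u t, h u t != 0 -> exists x, (u, t) = i x) ->
  (forall x, W (i x).1 * cmod (h (i x).1 (i x).2) <= c * (cmod (g x) * W' x)) ->
  in_l1 W' g -> in_l1 W (fun u => csum (h u)).
Proof.
move=> W0 W'0 c0 i_inj h_range bound g_fin; apply: le_lt_trans (esum_cmod_csum_le h W0) _.
rewrite (esum_setT_reindex i_inj) => [|x|[u t] nz]; last 2 first.
- by rewrite lee_fin mulr_ge0 ?cmod_ge0.
- by apply: h_range; apply: contra nz => /eqP ->; rewrite cmod0 mulr0.
apply: lte_mul_pinfty => //.
apply: (@le_lt_trans _ _ (c%:E * \esum_(x in [set: V]) (cmod (g x) * W' x)%:E)%E).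
  rewrite -ge0_esumZl => [|//|x]; last by rewrite lee_fin mulr_ge0 ?cmod_ge0.
  by apply: le_esum => x _; rewrite -EFinM lee_fin.
exact: lte_mul_pinfty.
Qed.

Section semigroup.
Variables (S : choiceType) (op : S -> S -> S).
Hypothesis op_assoc : associative op.

Lemma left_unit_of_right_unit (lc : left_cancellative op) s t :
  op s t = s -> forall x, op t x = x.
Proof. by move=> st x; apply: (lc s); rewrite op_assoc st. Qed.

Lemma is_group_of_left_inverses e :
  (forall x, op e x = x /\ op x e = x) -> (forall s, exists l, op l s = e) -> is_group op.
Proof.
move=> e_unit left_inv; exists e; split => // x.
have [l lx] := left_inv x; have [l' l'l] := left_inv l.
have xE : x = l' by rewrite -[x](proj1 (e_unit x)) -l'l -op_assoc lx (proj2 (e_unit l')).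
by exists l; split => //; rewrite xE.
Qed.

End semigroup.

Section beurling_algebra.
Variables (R : realType) (S : choiceType) (op : S -> S -> S).
Hypotheses (op_assoc : associative op) (lc : left_cancellative op).
Variable w : S -> R.
Hypothesis w_weight : is_weight op w.

Definition delta (t x : S) : R[i] := if x == t then 1 else 0.

Definition comm_defect (a : S -> R[i]) (M : S * S -> R[i]) : R :=
  l1norm (wprod w) (fun q => lact op a M q - ract op M a q).

Definition unit_defect (a : S -> R[i]) (M : S * S -> R[i]) : R :=
  l1norm w (fun u => Defs.conv op a (pimap op M) u - a u).

Lemma weight_gt0 x : 0 < w x.
Proof. by case: w_weight. Qed.

Lemma weight_ge0 x : 0 <= w x.
Proof. exact/ltW/weight_gt0. Qed.

Lemma weight_mul x y : w (op x y) <= w x * w y.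
Proof. by case: w_weight. Qed.

Lemma wprod_ge0 p : 0 <= wprod w p.
Proof. by rewrite mulr_ge0 ?weight_ge0. Qed.

Lemma weight_ge1 u s : op u s = s -> 1 <= w u.
Proof. by move=> us; have := weight_mul u s; have := weight_gt0 s; rewrite us; nra. Qed.

Lemma wprod_ge1 s p : op (op p.1 p.2) s = s -> 1 <= wprod w p.
Proof. by move=> /weight_ge1 /le_trans; apply; exact: weight_mul. Qed.

Lemma in_l1_delta t : in_l1 w (delta t).
Proof.
rewrite /in_l1 (@esum_setT1 _ _ _ t) /delta ?eqxx ?cmod1 ?mul1r ?ltry //.
  by move=> x /negbTE ->; rewrite cmod0 mul0r.
by rewrite lee_fin weight_ge0.
Qed.

Lemma in_l1_pimap M : in_l1 (wprod w) M -> in_l1 w (pimap op M).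
Proof.
apply: (@in_l1_csum _ _ _ _ _ _ (fun u p => if op p.1 p.2 == u then M p else 0) _
  (fun p => (op p.1 p.2, p)) 1) => [x|p|||u p|p].
- exact: weight_ge0.
- exact: wprod_ge0.
- exact: ler01.
- by move=> p q [].
- by case: (op p.1 p.2 =P u) => [<- _|_]; [exists p|rewrite eqxx].
- by rewrite /= eqxx mul1r mulrC ler_wpM2l ?cmod_ge0 ?weight_mul.
Qed.

Lemma in_l1_conv_delta s g : in_l1 w g -> in_l1 w (Defs.conv op (delta s) g).
Proof.
apply: (@in_l1_csum _ _ _ _ _ _ (fun u p => if op p.1 p.2 == u then delta s p.1 * g p.2 else 0) _
  (fun t => (op s t, (s, t))) (w s)) => [x|x|||u [p1 p2]|t].
- exact: weight_ge0.
- exact: weight_ge0.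
- exact: weight_ge0.
- by move=> t t' [].
- rewrite /delta /=; case: (op p1 p2 =P u) => [<-|]; last by rewrite eqxx.
  by case: (p1 =P s) => [-> _|]; [exists p2|rewrite mul0r eqxx].
- rewrite /= eqxx /delta eqxx mul1r.
  by have := weight_mul s t; have := cmod_ge0 (g t); have := weight_ge0 (op s t); nra.
Qed.

Lemma in_l1_lact_delta s M : in_l1 (wprod w) M -> in_l1 (wprod w) (lact op (delta s) M).
Proof.
apply: (@in_l1_csum _ _ _ _ _ _
  (fun q p => if op p.1 p.2 == q.1 then delta s p.1 * M (p.2, q.2) else 0) _
  (fun p => ((op s p.1, p.2), (s, p.1))) (w s)) => [x|x|||[q1 q2] [p1 p2]|[t y]].
- exact: wprod_ge0.
- exact: wprod_ge0.
- exact: weight_ge0.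
- by move=> [t y] [t' y'] /= [_ -> ->].
- rewrite /delta /=; case: (op p1 p2 =P q1) => [<-|]; last by rewrite eqxx.
  by case: (p1 =P s) => [-> _|]; [exists (p2, q2)|rewrite mul0r eqxx].
- rewrite /= eqxx /delta eqxx mul1r /wprod /=.
  have := weight_mul s t; have := mulr_ge0 (weight_ge0 y) (cmod_ge0 (M (t, y))).
  by have := weight_ge0 (op s t); nra.
Qed.

Lemma in_l1_ract_delta s M : in_l1 (wprod w) M -> in_l1 (wprod w) (ract op M (delta s)).
Proof.
apply: (@in_l1_csum _ _ _ _ _ _
  (fun q p => if op p.1 p.2 == q.2 then M (q.1, p.1) * delta s p.2 else 0) _
  (fun p => ((p.1, op p.2 s), (p.2, s))) (w s)) => [x|x|||[q1 q2] [p1 p2]|[t y]].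
- exact: wprod_ge0.
- exact: wprod_ge0.
- exact: weight_ge0.
- by move=> [t y] [t' y'] /= [-> _ ->].
- rewrite /delta /=; case: (op p1 p2 =P q2) => [<-|]; last by rewrite eqxx.
  by case: (p2 =P s) => [-> _|]; [exists (q1, p1)|rewrite mulr0 eqxx].
- rewrite /= eqxx /delta eqxx mulr1 /wprod /=.
  have := weight_mul y s; have := mulr_ge0 (weight_ge0 t) (cmod_ge0 (M (t, y))).
  by have := weight_ge0 (op y s); nra.
Qed.

Lemma conv_delta_mul s t g : Defs.conv op (delta s) g (op s t) = g t.
Proof.
rewrite /Defs.conv (@csum1 _ _ _ (s, t)) /= ?eqxx /delta ?eqxx ?mul1r // => -[p1 p2] /=.
case: (p1 =P s) => [->|_]; last by rewrite mul0r; case: ifP.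
by rewrite mul1r => st; case: eqP => // /lc tE; move: st; rewrite tE eqxx.
Qed.

Lemma conv_delta_out s z g : (forall t, op s t <> z) -> Defs.conv op (delta s) g z = 0.
Proof.
move=> z_out; rewrite /Defs.conv csum0 // => -[p1 p2] /=; rewrite /delta.
case: (p1 =P s) => [->|_]; last by rewrite mul0r; case: ifP.
by case: eqP => // /z_out.
Qed.

Lemma lact_delta_out s M q : (forall t, op s t <> q.1) -> lact op (delta s) M q = 0.
Proof.
move=> q_out; rewrite /lact csum0 // => -[p1 p2] /=; rewrite /delta.
case: (p1 =P s) => [->|_]; last by rewrite mul0r; case: ifP.
by case: eqP => // /q_out.
Qed.

Lemma ract_delta_out s M q : (forall t, op t s <> q.2) -> ract op M (delta s) q = 0.
Proof.
move=> q_out; rewrite /ract csum0 // => -[p1 p2] /=; rewrite /delta.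
case: (p2 =P s) => [->|_]; last by rewrite mulr0; case: ifP.
by case: eqP => // /q_out.
Qed.

Lemma cmod_conv_delta_le s M q : in_l1 (wprod w) M ->
  cmod (Defs.conv op (delta s) (pimap op M) q - delta s q) * w q <= unit_defect (delta s) M.
Proof.
move=> M_l1; apply: (cmod_le_l1norm weight_ge0).
exact (in_l1B weight_ge0 (in_l1_conv_delta s (in_l1_pimap M_l1)) (in_l1_delta s)).
Qed.

(* As [s] has no left inverse, at most one of the two actions of [delta s] on [M]
   is nonzero at [q]. *)
Lemma Re_ract_le_cmod_comm e s M q : (forall x, op x e = x) -> ~ (exists l, op l s = e) ->
  op q.1 q.2 = s ->
  `|complex.Re (ract op M (delta s) q)| <= cmod (lact op (delta s) M q - ract op M (delta s) q).
Proof.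
move=> e_right no_inv; case: q => q1 q2 qs; rewrite /= in qs.
have [[v q2E]|q2_out] := pselect (exists v, q2 = op v s); last first.
  rewrite ract_delta_out => [|t /= tq2]; last by apply: q2_out; exists t.
  by rewrite subr0 (_ : complex.Re 0 = 0) // normr0 cmod_ge0.
rewrite lact_delta_out => [|t /= tq1]; first by rewrite sub0r cmodN Re_le_cmod.
apply: no_inv; exists (op t v); rewrite -op_assoc -q2E.
apply: (lc (s := s)).
by rewrite op_assoc tq1 qs e_right.
Qed.

Definition stab_part s (M : S * S -> R[i]) (p : S * S) : R :=
  if op (op p.1 p.2) s == s then complex.Re (M p) else 0.

Lemma rsummable_stab_part s M : in_l1 (wprod w) M -> rsummable (stab_part s M).
Proof.
apply: rsummable_le => p; rewrite /stab_part; case: eqP => [ps|_].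
  by rewrite (le_trans (Re_le_cmod _)) // ler_peMr ?cmod_ge0 ?(wprod_ge1 ps).
by rewrite normr0 mulr_ge0 ?cmod_ge0 ?wprod_ge0.
Qed.

Lemma rsum_stab_part_pimap s M : in_l1 (wprod w) M ->
  rsum (stab_part s M) = rsum (fun u => if op u s == s then complex.Re (pimap op M u) else 0).
Proof.
move=> M_l1; pose K (x : S * (S * S)) :=
  if (op x.1 s == s) && (op x.2.1 x.2.2 == x.1) then complex.Re (M x.2) else 0.
have -> : stab_part s M = fun p => K (op p.1 p.2, p).
  by apply: funext => p; rewrite /K /= eqxx andbT.
rewrite rsum_pair_reindex => [||[u p]|].
- congr rsum; apply: funext => u; rewrite /K /=; case: ifP => us; last by rewrite rsum0.
  by congr rsum; apply: funext => p /=; case: ifP.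
- by move=> p q [].
- by rewrite /K /=; case: ifP => [/andP[_ /eqP <-] _|_]; [exists p|rewrite eqxx].
- have := rsummable_stab_part s M_l1; congr rsummable; apply: funext => p.
  by rewrite /K /= eqxx andbT.
Qed.

Lemma rsum_stab_part_ract s M : in_l1 (wprod w) M ->
  rsum (stab_part s M) =
  rsum (fun q => if op q.1 q.2 == s then complex.Re (ract op M (delta s) q) else 0).
Proof.
move=> M_l1; pose K (x : (S * S) * (S * S)) :=
  if [&& op x.1.1 x.1.2 == s, op x.2.1 x.2.2 == x.1.2 & x.2.2 == s]
  then complex.Re (M (x.1.1, x.2.1)) else 0.
have -> : stab_part s M = fun p => K ((p.1, op p.2 s), (p.2, s)).
  by apply: funext => -[p1 p2]; rewrite /K /stab_part /= !eqxx !andbT op_assoc.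
rewrite rsum_pair_reindex => [||[[q1 q2] [p1 p2]]|].
- congr rsum; apply: funext => -[q1 q2]; rewrite /K /=; case: ifP => qs; last by rewrite rsum0.
  congr rsum; apply: funext => -[p1 p2] /=; rewrite /delta.
  by case: (op p1 p2 == q2); case: (p2 == s); rewrite /= ?mulr1 ?mulr0.
- by move=> [p1 p2] [p1' p2'] [-> _ ->].
- rewrite /K /=; case: ifP => [/and3P[_ /eqP <- /eqP ->] _|_]; last by rewrite eqxx.
  by exists (q1, p1).
- have := rsummable_stab_part s M_l1; congr rsummable; apply: funext => -[p1 p2].
  by rewrite /K /stab_part /= !eqxx !andbT op_assoc.
Qed.

Lemma rsum_stab_part_near1 e s M : (forall x, op e x = x) -> in_l1 (wprod w) M ->
  `|rsum (stab_part s M) - 1| <= unit_defect (delta e) M.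
Proof.
move=> e_left M_l1; have A_ge1 u : op u s == s -> 1 <= w u by move=> /eqP /weight_ge1.
have piM_l1 := in_l1_pimap M_l1; have d_l1 := in_l1_delta e.
have [ReM_fin _] := rsum_restrict_le (A := fun u => op u s == s)
  (g := fun u => complex.Re (pimap op M u)) weight_ge0 ltr01 A_ge1 (fun u _ => Re_le_cmod _) piM_l1.
have [Red_fin _] := rsum_restrict_le (A := fun u => op u s == s)
  (g := fun u => complex.Re (delta e u)) weight_ge0 ltr01 A_ge1 (fun u _ => Re_le_cmod _) d_l1.
have [_ bound] := rsum_restrict_le (A := fun u => op u s == s)
  (g := fun u => complex.Re (pimap op M u - delta e u)) weight_ge0 ltr01 A_ge1
  (fun u _ => Re_le_cmod _) (in_l1B weight_ge0 piM_l1 d_l1).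
have one : rsum (fun u => if op u s == s then complex.Re (delta e u) else 0) = 1.
  rewrite (rsum1 (t := e)) => [|x]; first by rewrite e_left eqxx /delta eqxx.
  by rewrite /delta => /negbTE ->; case: ifP.
have unitE : unit_defect (delta e) M = l1norm w (fun u => pimap op M u - delta e u).
  congr l1norm; apply: funext => u.
  by have := conv_delta_mul e u (pimap op M); rewrite e_left => ->.
rewrite mul1r in bound; rewrite unitE rsum_stab_part_pimap // -[X in _ - X]one -rsumB //.
suff -> : (fun u => (if op u s == s then complex.Re (pimap op M u) else 0) -
                    (if op u s == s then complex.Re (delta e u) else 0)) =
          (fun u => if op u s == s then complex.Re (pimap op M u - delta e u) else 0) by [].
by apply: funext => u; rewrite ReB; case: ifP; rewrite ?subr0.
Qed.

Lemma rsum_stab_part_small e s M : (forall x, op x e = x) -> ~ (exists l, op l s = e) ->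
  in_l1 (wprod w) M -> w s * `|rsum (stab_part s M)| <= comm_defect (delta s) M.
Proof.
move=> e_right no_inv M_l1; rewrite rsum_stab_part_ract //.
have D_l1 := in_l1B wprod_ge0 (in_l1_lact_delta s M_l1) (in_l1_ract_delta s M_l1).
apply: (proj2 (rsum_restrict_le (A := fun q => op q.1 q.2 == s)
  (g := fun q => complex.Re (ract op M (delta s) q)) wprod_ge0 (weight_gt0 s) _ _ D_l1)).
- by move=> q /eqP <-; exact: weight_mul.
- by move=> q /eqP; exact: Re_ract_le_cmod_comm.
Qed.

Section approximate_diagonal.
Variables (I : Type) (le : I -> I -> Prop) (m : I -> S * S -> R[i]).
Hypothesis m_diag : approx_diagonal op w le m.

Let diag_refl i : le i i.
Proof. by case: m_diag. Qed.

Let diag_l1 i : in_l1 (wprod w) (m i).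
Proof. by case: m_diag. Qed.

Lemma approx_diagonal_eventually a eps : in_l1 w a -> 0 < eps ->
  exists i0, forall i, le i0 i -> comm_defect a (m i) < eps /\ unit_defect a (m i) < eps.
Proof. by move=> a_l1 eps_gt0; case: m_diag => _ _ _ _ /(_ a a_l1 eps eps_gt0). Qed.

Lemma approx_diagonal_common a b eps1 eps2 : in_l1 w a -> in_l1 w b -> 0 < eps1 -> 0 < eps2 ->
  exists i, [/\ comm_defect a (m i) < eps1, unit_defect a (m i) < eps1,
                comm_defect b (m i) < eps2 & unit_defect b (m i) < eps2].
Proof.
move=> a_l1 b_l1 eps1_gt0 eps2_gt0.
have [i0 a_small] := approx_diagonal_eventually a_l1 eps1_gt0.
have [j0 b_small] := approx_diagonal_eventually b_l1 eps2_gt0.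
have [_ _ directed _ _] := m_diag; have [k [i0k j0k]] := directed i0 j0.
by exists k; have [? ?] := a_small k i0k; have [? ?] := b_small k j0k.
Qed.

Lemma exists_right_unit s : exists t, op s t = s.
Proof.
apply/not_existsP => no_unit.
have [i0 /(_ i0 (diag_refl i0)) [_ small]] :=
  approx_diagonal_eventually (in_l1_delta s) (weight_gt0 s).
have := cmod_conv_delta_le s s (diag_l1 i0); rewrite conv_delta_out => [|t]; last exact: no_unit.
by rewrite /delta eqxx sub0r cmodN cmod1 mul1r => /le_lt_trans /(_ small); rewrite ltxx.
Qed.

Lemma exists_identity (s0 : S) : exists e, forall x, op e x = x /\ op x e = x.
Proof.
have [e s0e] := exists_right_unit s0.
exists e => x; split; first exact: left_unit_of_right_unit s0e x.
have [t xt] := exists_right_unit x; have [te|te] := eqVneq t e; first by rewrite -te.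
(* [t] and [e] are distinct left units; the coefficient of [pimap (m k)] at [e]
   would have to be close to both 0 and 1. *)
have xe_ne : op x e != x.
  by apply: contra te => /eqP xe; apply/eqP; apply: (lc (s := x)); rewrite xt xe.
have [k [_ x_small _ s0_small]] := approx_diagonal_common (in_l1_delta x) (in_l1_delta s0)
  (divr_gt0 (weight_gt0 (op x e)) (ltr0Sn _ 1)) (divr_gt0 (weight_gt0 s0) (ltr0Sn _ 1)).
have := cmod_conv_delta_le x (op x e) (diag_l1 k).
have dx : delta x (op x e) = 0 by rewrite /delta (negbTE xe_ne).
rewrite conv_delta_mul dx subr0 => /le_lt_trans /(_ x_small) near0.
have := cmod_conv_delta_le s0 (op s0 e) (diag_l1 k).
rewrite conv_delta_mul s0e /delta eqxx => /le_lt_trans /(_ s0_small) near1.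
have := weight_gt0 (op x e); have := weight_gt0 s0.
have := Re_le_cmod (pimap op (m k) e); have := Re_le_cmod (pimap op (m k) e - 1).
rewrite ReB (_ : complex.Re 1 = 1) //.
move=> ? ? ? ?; exfalso; apply: (@not_half_close_0_1 _ (complex.Re (pimap op (m k) e))); nra.
Qed.

Lemma exists_left_inverse e s : (forall x, op e x = x /\ op x e = x) -> exists l, op l s = e.
Proof.
move=> e_unit; case: (pselect (exists l, op l s = e)) => // no_inv; exfalso.
(* The mass of [pimap (m k)] on [{u | u s = s}] is close to 1, but also close to 0
   because of [delta s]. *)
have [k [_ e_small s_small _]] := approx_diagonal_common (in_l1_delta e) (in_l1_delta s)
  (divr_gt0 ltr01 (ltr0Sn _ 1)) (divr_gt0 (weight_gt0 s) (ltr0Sn _ 1)).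
have := le_lt_trans (rsum_stab_part_near1 s (fun x => proj1 (e_unit x)) (diag_l1 k)) e_small.
have := le_lt_trans (rsum_stab_part_small (fun x => proj2 (e_unit x)) no_inv (diag_l1 k)) s_small.
have := weight_gt0 s; move=> ? ? ?.
by apply: (@not_half_close_0_1 _ (rsum (stab_part s (m k)))); nra.
Qed.

Lemma approx_diagonal_is_group (s0 : S) : is_group op.
Proof.
have [e e_unit] := exists_identity s0.
by apply: (is_group_of_left_inverses op_assoc e_unit) => s; exact: exists_left_inverse e_unit.
Qed.

End approximate_diagonal.

End beurling_algebra.

Theorem theorem2p10 (R : realType) (S : choiceType) (op : S -> S -> S)
    (op_assoc : associative op) (S_nonempty : inhabited S)
    (lc : left_cancellative op) (w : S -> R) (hw : is_weight op w) :
  pseudo_amenable_l1 op w -> is_group op.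
Proof.
move=> [I [le [m m_diag]]]; case: S_nonempty => s0.
exact (approx_diagonal_is_group op_assoc lc hw m_diag s0).
Qed.
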